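(* Let $\varepsilon>0$, assume $(a,b,c)\neq(0,0,0)$, and let $0<\lambda<a_1$. Then the equilibrium point $$e_{2\lambda}=\Big(\frac{a}{\lambda-a_1},\frac{b}{\lambda-a_2},\frac{c}{\lambda-a_3}\Big)$$ of the $\varepsilon$-revised system $$\dot{\mathbf x}=\mathbf x\times\mathbf m(\mathbf x)+\varepsilon[(\mathbf x\times\mathbf m(\mathbf x))\times\mathbf m(\mathbf x)]$$ is unstable (not Lyapunov stable).
   Context: Fix constants $0<a_1<a_2<a_3$ and $a,b,c\in\mathbb R$. Set $\mathbf m(\mathbf x)=(a_1x^1+a,\ a_2x^2+b,\ a_3x^3+c)$; $\times$ is the cross product in $\mathbb R^3$. For $\lambda\notin\{a_1,a_2,a_3\}$ the point $e_{2\lambda}$ satisfies $\mathbf m(e_{2\lambda})=\lambda e_{2\lambda}$, so it is an equilibrium. *)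

From Stdlib Require Import Reals.
Open Scope R_scope.

Record V3 := mkV3 { c1 : R; c2 : R; c3 : R }.

Definition vadd (u v : V3) : V3 := mkV3 (c1 u + c1 v) (c2 u + c2 v) (c3 u + c3 v).
Definition vsub (u v : V3) : V3 := mkV3 (c1 u - c1 v) (c2 u - c2 v) (c3 u - c3 v).
Definition vscale (k : R) (u : V3) : V3 := mkV3 (k * c1 u) (k * c2 u) (k * c3 u).
Definition vnorm (u : V3) : R := sqrt (c1 u ^ 2 + c2 u ^ 2 + c3 u ^ 2).

Definition cross (u v : V3) : V3 :=
  mkV3 (c2 u * c3 v - c3 u * c2 v)
       (c3 u * c1 v - c1 u * c3 v)
       (c1 u * c2 v - c2 u * c1 v).

Definition mfield (a1 a2 a3 a b c : R) (x : V3) : V3 :=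
  mkV3 (a1 * c1 x + a) (a2 * c2 x + b) (a3 * c3 x + c).

Definition revised_field (eps a1 a2 a3 a b c : R) (x : V3) : V3 :=
  let m := mfield a1 a2 a3 a b c x in
  vadd (cross x m) (vscale eps (cross (cross x m) m)).

Definition e2 (a1 a2 a3 a b c lam : R) : V3 :=
  mkV3 (a / (lam - a1)) (b / (lam - a2)) (c / (lam - a3)).

Definition is_forward_solution (F : V3 -> V3) (x : R -> V3) : Prop :=
  (forall e, 0 < e -> exists d, 0 < d /\
     forall t, 0 <= t < d -> vnorm (vsub (x t) (x 0)) < e) /\
  (forall t, 0 < t ->
     derivable_pt_lim (fun s => c1 (x s)) t (c1 (F (x t))) /\
     derivable_pt_lim (fun s => c2 (x s)) t (c2 (F (x t))) /\
     derivable_pt_lim (fun s => c3 (x s)) t (c3 (F (x t)))).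

Definition lyapunov_stable (F : V3 -> V3) (p : V3) : Prop :=
  forall eps, 0 < eps -> exists delta, 0 < delta /\
    forall x0, vnorm (vsub x0 p) < delta ->
      (exists x, is_forward_solution F x /\ x 0 = x0) /\
      (forall x, is_forward_solution F x -> x 0 = x0 ->
         forall t, 0 <= t -> vnorm (vsub (x t) p) < eps).

(* The energy H(x) = 1/2 x.Ax + d.x (with m(x) = Ax + d) is a first integral of the
   revised system, while Q(x) = sum_i (a_i - lam)/(2 lam) (x_i - p_i)^2, which is positive
   definite around the equilibrium p because lam < a_1, grows along solutions at the rate
   eps |x × m(x)|^2.  On the energy level of p this rate dominates |x - p|^2, hence Q itself,
   near p; and that level contains points arbitrarily close to p other than p.  A solution
   started at such a point can therefore not stay near p: Q would grow at least linearly in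
   time while remaining bounded. *)

From Stdlib Require Import Reals Lra Psatz.
From Coquelicot Require Import Coquelicot.
Open Scope R_scope.

Definition right_continuous0 (g : R -> R) : Prop := limit1_in g (Rle 0) (g 0) 0.

Lemma right_continuous0P (g : R -> R) :
  right_continuous0 g ->
  forall e, 0 < e -> exists d, 0 < d /\ forall t, 0 <= t < d -> Rabs (g t - g 0) < e.
Proof.
  intros Hg e he. destruct (Hg e he) as [d [hd Hd]]. exists d. split; [lra|].
  intros t ht. apply (Hd t). split; [lra|].
  simpl. unfold R_dist. rewrite Rminus_0_r, Rabs_right; lra.
Qed.

Lemma linear_growth_of_deriv_ge (f f' : R -> R) (K s t : R) :
  0 < s -> s < t ->
  (forall u, 0 < u -> derivable_pt_lim f u (f' u)) -> (forall u, 0 < u -> K <= f' u) ->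
  K * (t - s) <= f t - f s.
Proof.
  intros hs hst Hd HK. destruct (MVT_cor2 f f' s t hst) as [c [-> hc]].
  - intros c hc. apply Hd. lra.
  - apply Rmult_le_compat_r; [lra|]. apply HK. lra.
Qed.

Lemma nondecreasing_of_deriv_nonneg (g g' : R -> R) :
  right_continuous0 g ->
  (forall t, 0 < t -> derivable_pt_lim g t (g' t)) -> (forall t, 0 < t -> 0 <= g' t) ->
  forall s t, 0 <= s <= t -> g s <= g t.
Proof.
  intros Hc Hd Hpos.
  assert (Hpos_times : forall s t, 0 < s <= t -> g s <= g t).
  { intros s t [hs hst]. destruct (Req_dec s t) as [<-|hne]; [lra|].
    pose proof (linear_growth_of_deriv_ge g g' 0 s t hs ltac:(lra) Hd Hpos). lra. }
  intros s t [hs hst]. destruct (Req_dec s 0) as [->|hs0]; [|apply Hpos_times; split; lra].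
  destruct (Req_dec t 0) as [->|ht0]; [lra|].
  destruct (Rle_lt_dec (g 0) (g t)) as [|hlt]; [assumption|].
  destruct (right_continuous0P g Hc (g 0 - g t)) as [d [hd Hd']]; [lra|].
  set (u := Rmin d t / 2).
  assert (hmin : 0 < Rmin d t) by (apply Rmin_pos; lra).
  assert (hu : 0 < u <= t) by (unfold u; pose proof (Rmin_r d t); lra).
  assert (Hclose : Rabs (g u - g 0) < g 0 - g t)
    by (apply Hd'; unfold u; pose proof (Rmin_l d t); split; lra).
  pose proof (Hpos_times u t hu). apply Rabs_def2 in Hclose. lra.
Qed.

Lemma constant_of_deriv_zero (g g' : R -> R) :
  right_continuous0 g ->
  (forall t, 0 < t -> derivable_pt_lim g t (g' t)) -> (forall t, 0 < t -> g' t = 0) ->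
  forall t, 0 <= t -> g t = g 0.
Proof.
  intros Hc Hd Hzero t ht.
  assert (Hup := nondecreasing_of_deriv_nonneg g g' Hc Hd
                   ltac:(intros u hu; rewrite Hzero; lra) 0 t ltac:(lra)).
  assert (Hdown := nondecreasing_of_deriv_nonneg (fun u => 0 - g u) (fun u => 0 - g' u)).
  assert (Hcn : right_continuous0 (fun u => 0 - g u)).
  { apply limit_minus; [exact (limit_free (fun _ => 0) _ 0 0)| exact Hc]. }
  specialize (Hdown Hcn).
  assert (0 - g 0 <= 0 - g t); [|lra].
  apply Hdown.
  - intros u hu. apply derivable_pt_lim_minus; [apply derivable_pt_lim_const| auto].
  - intros u hu. rewrite Hzero; lra.
  - lra.
Qed.

Definition dot (u v : V3) : R := c1 u * c1 v + c2 u * c2 v + c3 u * c3 v.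
Definition norm2 (u : V3) : R := dot u u.
Definition vmul (u v : V3) : V3 := mkV3 (c1 u * c1 v) (c2 u * c2 v) (c3 u * c3 v).

Lemma norm2_ge0 u : 0 <= norm2 u.
Proof. unfold norm2, dot. nra. Qed.

Lemma vnorm_lt u r : 0 < r -> vnorm u < r <-> norm2 u < r ^ 2.
Proof.
  intro hr. unfold vnorm.
  replace (c1 u ^ 2 + c2 u ^ 2 + c3 u ^ 2) with (norm2 u) by (unfold norm2, dot; ring).
  pose proof (norm2_ge0 u). split; intro Hlt.
  - apply sqrt_lt_0_alt. rewrite sqrt_pow2; lra.
  - rewrite <- (sqrt_pow2 r) by lra. apply sqrt_lt_1_alt. lra.
Qed.

Lemma lagrange_identity u v : norm2 (cross u v) + dot u v ^ 2 = norm2 u * norm2 v.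
Proof. unfold norm2, dot, cross; simpl; ring. Qed.

Lemma binet_cauchy u v w : dot (cross u v) (cross u w) = norm2 u * dot v w - dot u v * dot u w.
Proof. unfold norm2, dot, cross; simpl; ring. Qed.

Lemma cauchy_schwarz u v : dot u v ^ 2 <= norm2 u * norm2 v.
Proof. rewrite <- lagrange_identity. pose proof (norm2_ge0 (cross u v)). lra. Qed.

Lemma dot_cross_r u v : dot u (cross v u) = 0.
Proof. unfold dot, cross; simpl; ring. Qed.

Lemma rayleigh_bounds w : 0 < c1 w -> 0 < c2 w -> 0 < c3 w ->
  exists m M, 0 < m <= M /\ forall y, m * norm2 y <= dot y (vmul w y) <= M * norm2 y.
Proof.
  intros h1 h2 h3. exists (Rmin (Rmin (c1 w) (c2 w)) (c3 w)), (c1 w + c2 w + c3 w).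
  pose proof (Rmin_l (Rmin (c1 w) (c2 w)) (c3 w)); pose proof (Rmin_r (Rmin (c1 w) (c2 w)) (c3 w));
  pose proof (Rmin_l (c1 w) (c2 w)); pose proof (Rmin_r (c1 w) (c2 w)).
  set (m := Rmin (Rmin (c1 w) (c2 w)) (c3 w)) in *.
  split; [split; [repeat apply Rmin_pos; assumption | lra]|].
  intro y. unfold norm2, dot, vmul; simpl.
  assert (0 <= c1 y * c1 y) by nra.
  assert (0 <= c2 y * c2 y) by nra.
  assert (0 <= c3 y * c3 y) by nra.
  split; nra.
Qed.

Definition has_lie_derivative (F : V3 -> V3) (f df : V3 -> R) : Prop :=
  forall x, is_forward_solution F x ->
    right_continuous0 (fun t => f (x t)) /\
    forall t, 0 < t -> derivable_pt_lim (fun s => f (x s)) t (df (x t)).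

Lemma lie_invariant F f df x :
  has_lie_derivative F f df -> (forall v, df v = 0) -> is_forward_solution F x ->
  forall t, 0 <= t -> f (x t) = f (x 0).
Proof.
  intros Hf Hzero Hx. destruct (Hf x Hx) as [Hc Hd].
  apply (constant_of_deriv_zero (fun t => f (x t)) (fun t => df (x t))); auto.
Qed.

Lemma lie_nondecreasing F f df x :
  has_lie_derivative F f df -> (forall v, 0 <= df v) -> is_forward_solution F x ->
  forall s t, 0 <= s <= t -> f (x s) <= f (x t).
Proof.
  intros Hf Hpos Hx. destruct (Hf x Hx) as [Hc Hd].
  apply (nondecreasing_of_deriv_nonneg (fun t => f (x t)) (fun t => df (x t))); auto.
Qed.

Lemma solution_coords_right_continuous F x : is_forward_solution F x ->
  right_continuous0 (fun t => c1 (x t)) /\ right_continuous0 (fun t => c2 (x t)) /\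
  right_continuous0 (fun t => c3 (x t)).
Proof.
  intros [Hc _].
  assert (Hcoord : forall pr : V3 -> R, (forall u, pr u ^ 2 <= norm2 u) ->
            (forall u v, pr (vsub u v) = pr u - pr v) -> right_continuous0 (fun t => pr (x t))).
  { intros pr Hle Hsub e he. destruct (Hc e he) as [d [hd Hd]]. exists d. split; [lra|].
    intros t [ht hdt]. simpl in hdt |- *. unfold R_dist in *.
    rewrite Rminus_0_r, Rabs_right in hdt by lra.
    specialize (Hd t ltac:(lra)). apply (vnorm_lt _ e he) in Hd.
    specialize (Hle (vsub (x t) (x 0))). rewrite Hsub in Hle. apply Rabs_def1; nra. }
  repeat split; apply Hcoord; intros; unfold norm2, dot; simpl; nra.
Qed.

Definition quad1 (w q g y : R) : R := w * ((y - q) * (y - q)) + g * y.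

Lemma quad1_derive f t l w q g : derivable_pt_lim f t l ->
  derivable_pt_lim (fun s => quad1 w q g (f s)) t ((2 * w * (f t - q) + g) * l).
Proof.
  intro Hf. apply is_derive_Reals in Hf. apply is_derive_Reals. unfold quad1.
  auto_derive; [repeat split; exists l; exact Hf|].
  replace (Derive (fun s => f s) t) with l by (symmetry; apply is_derive_unique; exact Hf). ring.
Qed.

Definition quadratic (w q g v : V3) : R :=
  quad1 (c1 w) (c1 q) (c1 g) (c1 v) + quad1 (c2 w) (c2 q) (c2 g) (c2 v) +
  quad1 (c3 w) (c3 q) (c3 g) (c3 v).

Definition quadratic_grad (w q g v : V3) : V3 :=
  vadd (vscale 2 (vmul w (vsub v q))) g.

Lemma quadratic_lie F w q g :
  has_lie_derivative F (quadratic w q g) (fun v => dot (quadratic_grad w q g v) (F v)).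
Proof.
  intros x Hx. destruct (solution_coords_right_continuous F x Hx) as [C1 [C2 C3]].
  destruct Hx as [_ Hd]. split.
  - unfold quadratic, quad1.
    repeat first [ apply limit_plus | apply limit_minus | apply limit_mul
                 | exact C1 | exact C2 | exact C3 | exact (limit_free (fun _ => _) _ 0 0) ].
  - intros t ht. destruct (Hd t ht) as [D1 [D2 D3]].
    pose proof (derivable_pt_lim_plus _ _ t _ _
      (derivable_pt_lim_plus _ _ t _ _ (quad1_derive _ t _ (c1 w) (c1 q) (c1 g) D1)
                                     (quad1_derive _ t _ (c2 w) (c2 q) (c2 g) D2))
      (quad1_derive _ t _ (c3 w) (c3 q) (c3 g) D3)) as D.
    match type of D with derivable_pt_lim _ _ ?l =>
      replace (dot _ _) with l
        by (unfold quadratic_grad, dot, vmul, vsub, vadd, vscale; simpl; ring) end.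
    exact D.
Qed.

(* Quantitative form of: p × z vanishes only for z parallel to p, which k.z = 0 excludes
   as soon as k.p <> 0. *)
Lemma cross_norm2_lower p k z :
  dot p k ^ 2 * norm2 p * norm2 z <=
  (dot p k ^ 2 + 2 * norm2 (cross p k)) * norm2 (cross p z) + 2 * norm2 p ^ 2 * dot k z ^ 2.
Proof.
  pose proof (lagrange_identity p z) as Hpz.
  pose proof (binet_cauchy p z k) as Hbc.
  pose proof (cauchy_schwarz (cross p z) (cross p k)) as Hcs.
  set (W := dot (cross p z) (cross p k)) in *.
  assert (Hkz : dot z k = dot k z) by (unfold dot; ring). rewrite Hkz in Hbc.
  assert (Hsplit : (norm2 p * dot k z - W) ^ 2 <= 2 * (norm2 p * dot k z) ^ 2 + 2 * W ^ 2)
    by (pose proof (pow2_ge_0 (norm2 p * dot k z + W)); nra).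
  pose proof (norm2_ge0 (cross p z)).
  replace (dot p k ^ 2 * norm2 p * norm2 z) with
    (dot p k ^ 2 * (norm2 p * norm2 z)) by ring.
  replace (dot p k ^ 2 * (norm2 p * norm2 z)) with
    (dot p k ^ 2 * norm2 (cross p z) + (dot p z * dot p k) ^ 2) by (rewrite <- Hpz; ring).
  replace (dot p z * dot p k) with (norm2 p * dot k z - W) by lra.
  nra.
Qed.

Lemma cross_add_norm2_ge u v z :
  / 2 * norm2 (cross u z) - norm2 (cross v z) <= norm2 (cross (vadd u v) z).
Proof.
  set (a := cross u z); set (b := cross v z).
  assert (Hab : cross (vadd u v) z = vadd a b) by (unfold a, b, cross, vadd; simpl; f_equal; ring).
  rewrite Hab. pose proof (norm2_ge0 (vadd a (vscale 2 b))).
  unfold norm2, dot, vadd, vscale in *; simpl in *. nra.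
Qed.

Lemma linear_dominates_quadratic al be : 0 < al -> 0 <= be ->
  exists r, 0 < r /\ forall s, 0 <= s <= r -> al / 2 * s <= al * s - be * s ^ 2.
Proof.
  intros hal hbe. exists (al / (2 * be + 2)). split; [apply Rdiv_lt_0_compat; lra|].
  intros s [hs hsr].
  assert (Hbs : be * s <= al / 2).
  { apply Rmult_le_compat_l with (r := be) in hsr; [|lra].
    apply (Rle_trans _ _ _ hsr). unfold Rdiv.
    apply (Rmult_le_reg_r (2 * be + 2)); [lra|].
    field_simplify; [|lra]. nra. }
  nra.
Qed.

Definition shifted (lam : R) (w : V3) : V3 := mkV3 (c1 w - lam) (c2 w - lam) (c3 w - lam).

Lemma exists_orthogonal p : 0 < norm2 p -> exists w, dot w p = 0 /\ 0 < norm2 w.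
Proof.
  intro hp. unfold norm2, dot in *.
  destruct (Req_dec (c1 p) 0) as [e1|e1]; [destruct (Req_dec (c2 p) 0) as [e2|e2]|].
  - exists (mkV3 0 (c3 p) 0); simpl. rewrite e1, e2 in *. split; nra.
  - exists (mkV3 (c2 p) (- c1 p) 0); simpl. split; [ring|].
    pose proof (Rsqr_pos_lt _ e2). unfold Rsqr in *. nra.
  - exists (mkV3 (c2 p) (- c1 p) 0); simpl. split; [ring|].
    pose proof (Rsqr_pos_lt _ e1). unfold Rsqr in *. nra.
Qed.

Section Level_set.

Variables (lam : R) (aa p : V3).
Hypotheses (hlam : 0 < lam) (h1 : lam < c1 aa) (h2 : lam < c2 aa) (h3 : lam < c3 aa)
  (hp : 0 < norm2 p).

(* [on_level y]: p + y lies on the energy level of p when m(p) = lam p and A = diag aa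
   (see [energy_level]). *)
Definition on_level (y : V3) : Prop := lam * dot p y + / 2 * dot y (vmul aa y) = 0.

Lemma level_dot_bound : exists C, 0 <= C /\ forall y, on_level y -> dot p y ^ 2 <= C * norm2 y ^ 2.
Proof.
  destruct (rayleigh_bounds aa) as [m [M [[hm hmM] HA]]]; try lra.
  exists ((M / (2 * lam)) ^ 2). split; [apply pow2_ge_0|].
  intros y Hy. destruct (HA y) as [HAl HAu]. pose proof (norm2_ge0 y).
  assert (Hlam : lam * dot p y = - / 2 * dot y (vmul aa y)) by (unfold on_level in Hy; lra).
  apply (Rmult_le_reg_l (lam ^ 2)); [apply pow2_gt_0; lra|].
  replace (lam ^ 2 * dot p y ^ 2) with ((lam * dot p y) ^ 2) by ring.
  replace (lam ^ 2 * ((M / (2 * lam)) ^ 2 * norm2 y ^ 2)) with ((/ 2 * (M * norm2 y)) ^ 2)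
    by (field; lra).
  rewrite Hlam.
  assert (0 <= dot y (vmul aa y)) by nra.
  replace ((- / 2 * dot y (vmul aa y)) ^ 2) with ((/ 2 * dot y (vmul aa y)) ^ 2) by ring.
  apply pow_incr. lra.
Qed.

(* With z = B y and k = B^-1 p (B = diag (aa - lam)), k.z = p.y is O(|y|^2) on the level
   while k.p > 0. *)
Lemma level_cross_lower : exists al be, 0 < al /\ 0 <= be /\ forall y, on_level y ->
  al * norm2 y - be * norm2 y ^ 2 <= norm2 (cross (vadd p y) (vmul (shifted lam aa) y)).
Proof.
  set (b := shifted lam aa).
  assert (hb : 0 < c1 b /\ 0 < c2 b /\ 0 < c3 b) by (unfold b, shifted; simpl; lra).
  destruct (rayleigh_bounds (mkV3 (/ c1 b) (/ c2 b) (/ c3 b))) as [mk [Mk [[hmk _] Hk]]];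
    simpl; try (apply Rinv_0_lt_compat; lra).
  destruct (rayleigh_bounds (vmul b b)) as [mb [Mb [[hmb hmbM] Hb]]]; simpl; try nra.
  destruct level_dot_bound as [C [hC HC]].
  set (k := vmul (mkV3 (/ c1 b) (/ c2 b) (/ c3 b)) p).
  set (pk := dot p k).
  assert (hpk : 0 < pk) by (destruct (Hk p); unfold pk, k; nra).
  set (D := pk ^ 2 + 2 * norm2 (cross p k)).
  assert (hD : 0 < D) by (unfold D; pose proof (norm2_ge0 (cross p k)); nra).
  exists (pk ^ 2 * norm2 p * mb / 2 / D), ((norm2 p ^ 2 * C + D * Mb) / D). split; [|split].
  { apply Rdiv_lt_0_compat; [|lra]. apply Rdiv_lt_0_compat; [|lra].
    repeat apply Rmult_lt_0_compat; lra. }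
  { apply Rdiv_le_0_compat; [|lra].
    apply Rplus_le_le_0_compat; apply Rmult_le_pos; try lra; apply pow2_ge_0. }
  intros y Hy. set (z := vmul b y).
  assert (Hz : norm2 z = dot y (vmul (vmul b b) y)) by (unfold z, norm2, dot, vmul; simpl; ring).
  assert (Hkz : dot k z = dot p y) by (unfold k, z, dot, vmul; simpl; field; lra).
  destruct (Hb y) as [Hzl Hzu]. rewrite <- Hz in Hzl, Hzu.
  pose proof (cross_norm2_lower p k z) as Hpz. fold pk D in Hpz. rewrite Hkz in Hpz.
  pose proof (HC y Hy) as Hpy.
  pose proof (cross_add_norm2_ge p y z) as Hadd.
  assert (Hyz : norm2 (cross y z) <= norm2 y * (Mb * norm2 y)).
  { pose proof (lagrange_identity y z). pose proof (pow2_ge_0 (dot y z)).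
    pose proof (norm2_ge0 y). nra. }
  set (s := norm2 y) in *.
  assert (Hs : 0 <= s) by apply norm2_ge0.
  apply (Rmult_le_reg_l D); [lra|].
  replace (D * (_ - _))
    with (pk ^ 2 * norm2 p * mb / 2 * s - (norm2 p ^ 2 * C + D * Mb) * s ^ 2) by (field; lra).
  assert (0 <= pk ^ 2 * norm2 p) by (apply Rmult_le_pos; [apply pow2_ge_0 | lra]).
  assert (pk ^ 2 * norm2 p * (mb * s) <= pk ^ 2 * norm2 p * norm2 z)
    by (apply Rmult_le_compat_l; lra).
  assert (norm2 p ^ 2 * dot p y ^ 2 <= norm2 p ^ 2 * (C * s ^ 2))
    by (apply Rmult_le_compat_l; [apply pow2_ge_0 | lra]).
  assert (D * norm2 (cross y z) <= D * (s * (Mb * s))) by (apply Rmult_le_compat_l; lra).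
  assert (D * (/ 2 * norm2 (cross p z) - norm2 (cross y z)) <= D * norm2 (cross (vadd p y) z))
    by (apply Rmult_le_compat_l; lra).
  lra.
Qed.

Lemma level_cross_coercive : exists c r, 0 < c /\ 0 < r /\ forall y, on_level y -> norm2 y <= r ->
  c * norm2 y <= norm2 (cross (vadd p y) (vmul (shifted lam aa) y)).
Proof.
  destruct level_cross_lower as [al [be [hal [hbe Hlow]]]].
  destruct (linear_dominates_quadratic al be hal hbe) as [r [hr Hr]].
  exists (al / 2), r. split; [lra | split; [lra|]].
  intros y Hy Hyr. eapply Rle_trans; [apply Hr | apply Hlow, Hy].
  split; [apply norm2_ge0 | exact Hyr].
Qed.

Lemma on_level_line d : 0 < dot d (vmul aa d) ->
  on_level (vscale (- 2 * lam * dot p d / dot d (vmul aa d)) d).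
Proof.
  intro hd. unfold on_level.
  replace (dot p (vscale (- 2 * lam * dot p d / dot d (vmul aa d)) d))
    with (- 2 * lam * dot p d / dot d (vmul aa d) * dot p d) by (unfold dot, vscale; simpl; ring).
  replace (dot (vscale (- 2 * lam * dot p d / dot d (vmul aa d)) d)
               (vmul aa (vscale (- 2 * lam * dot p d / dot d (vmul aa d)) d)))
    with ((- 2 * lam * dot p d / dot d (vmul aa d)) ^ 2 * dot d (vmul aa d))
    by (unfold dot, vmul, vscale; simpl; ring).
  field. lra.
Qed.

(* Lines through w + del p, with w orthogonal to p, meet the level again at distance O(del). *)
Lemma level_points_near rho : 0 < rho -> exists y, 0 < norm2 y < rho /\ on_level y.
Proof.
  intro hrho.
  destruct (rayleigh_bounds aa) as [m [M [[hm _] HA]]]; try lra.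
  destruct (exists_orthogonal p hp) as [w [hwp hw]].
  set (P := norm2 p) in *. set (W := norm2 w) in *.
  set (tau := rho * m ^ 2 * W / (4 * lam ^ 2 * P ^ 2)).
  assert (htau : 0 < tau).
  { unfold tau. apply Rdiv_lt_0_compat; repeat apply Rmult_lt_0_compat; try lra. }
  set (del := Rmin 1 (tau / 2)).
  assert (hdel : 0 < del) by (apply Rmin_pos; lra).
  assert (hdel2 : del ^ 2 < tau).
  { assert (del <= 1) by apply Rmin_l. assert (del <= tau / 2) by apply Rmin_r.
    assert (del * del <= del * 1) by (apply Rmult_le_compat_l; lra). simpl. lra. }
  set (d := vadd w (vscale del p)).
  assert (hpd : dot p d = del * P) by (unfold d, P, norm2, dot, vadd, vscale in *; simpl; lra).
  assert (hdW : W <= norm2 d).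
  { replace (norm2 d) with (W + del ^ 2 * P)
      by (unfold d, W, P, norm2, dot, vadd, vscale in *; simpl; nra).
    pose proof (pow2_ge_0 del). nra. }
  destruct (HA d) as [HAd _]. set (dAd := dot d (vmul aa d)) in *.
  assert (hdAd : 0 < dAd) by nra.
  exists (vscale (- 2 * lam * dot p d / dAd) d). split; [|apply on_level_line; exact hdAd].
  rewrite hpd.
  assert (Hn : norm2 (vscale (- 2 * lam * (del * P) / dAd) d) * dAd ^ 2 =
               4 * lam ^ 2 * del ^ 2 * P ^ 2 * norm2 d)
    by (unfold norm2, dot, vscale; simpl; field; lra).
  set (n := norm2 (vscale (- 2 * lam * (del * P) / dAd) d)) in *.
  assert (hn : 0 <= n) by apply norm2_ge0.
  assert (Hnum : 0 < 4 * lam ^ 2 * del ^ 2 * P ^ 2 * norm2 d)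
    by (repeat apply Rmult_lt_0_compat; try lra; apply pow2_gt_0; lra).
  split.
  - destruct (Rle_lt_or_eq_dec 0 n hn) as [|E]; [assumption|]. rewrite <- E in Hn. lra.
  - assert (Hsq : m ^ 2 * norm2 d ^ 2 <= dAd ^ 2)
      by (rewrite <- Rpow_mult_distr; apply pow_incr; split; [nra | lra]).
    assert (Hnd : n * m ^ 2 * norm2 d <= 4 * lam ^ 2 * del ^ 2 * P ^ 2).
    { apply (Rmult_le_reg_r (norm2 d)); [lra|]. rewrite <- Hn. nra. }
    assert (Hfin : n * (m ^ 2 * W) < rho * (m ^ 2 * W)).
    { assert (4 * lam ^ 2 * del ^ 2 * P ^ 2 < rho * m ^ 2 * W).
      { unfold tau in hdel2. apply (Rmult_lt_compat_r (4 * lam ^ 2 * P ^ 2)) in hdel2;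
          [|repeat apply Rmult_lt_0_compat; try lra].
        replace (rho * m ^ 2 * W / (4 * lam ^ 2 * P ^ 2) * (4 * lam ^ 2 * P ^ 2))
          with (rho * m ^ 2 * W) in hdel2 by (field; lra). lra. }
      assert (n * m ^ 2 * W <= n * m ^ 2 * norm2 d) by (apply Rmult_le_compat_l; nra). nra. }
    apply Rmult_lt_reg_r in Hfin; [lra|]. apply Rmult_lt_0_compat; [apply pow2_gt_0|]; lra.
Qed.

End Level_set.

Lemma not_lyapunov_stable_of_growth F p H dH V dV r kap M :
  has_lie_derivative F H dH -> (forall v, dH v = 0) ->
  has_lie_derivative F V dV -> (forall v, 0 <= dV v) ->
  0 < r -> 0 < kap ->
  (forall v, vnorm (vsub v p) < r -> H v = H p -> kap * V v <= dV v) ->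
  (forall v, vnorm (vsub v p) < r -> V v <= M) ->
  (forall delta, 0 < delta -> exists v, vnorm (vsub v p) < delta /\ H v = H p /\ 0 < V v) ->
  ~ lyapunov_stable F p.
Proof.
  intros HH HdH HV HdV hr hkap Hgrowth Hbound Hstart Hst.
  destruct (Hst r hr) as [delta [hdel Hdel]].
  destruct (Hstart delta hdel) as [x0 [hx0 [Hx0H Hx0V]]].
  destruct (Hdel x0 hx0) as [[x [Hx Hx0]] Hin].
  assert (Hball : forall t, 0 <= t -> vnorm (vsub (x t) p) < r) by (intros; apply (Hin x); auto).
  assert (Hlevel : forall t, 0 <= t -> H (x t) = H p)
    by (intros t ht; rewrite (lie_invariant F H dH x HH HdH Hx t ht), Hx0; exact Hx0H).
  assert (Hmono : forall t, 0 <= t -> V x0 <= V (x t))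
    by (intros t ht; rewrite <- Hx0; apply (lie_nondecreasing F V dV x HV HdV Hx); lra).
  set (K := kap * V x0).
  assert (hK : 0 < K) by (apply Rmult_lt_0_compat; assumption).
  assert (HK : forall t, 0 < t -> K <= dV (x t)).
  { intros t ht. apply (Rle_trans _ (kap * V (x t))).
    - apply Rmult_le_compat_l; [lra | apply Hmono; lra].
    - apply Hgrowth; [apply Hball | apply Hlevel]; lra. }
  assert (HM : V x0 <= M) by (rewrite <- Hx0; apply Hbound, Hball; lra).
  set (T := 2 + (M - V x0) / K).
  assert (hT : 1 < T) by (unfold T; pose proof (Rdiv_le_0_compat (M - V x0) K ltac:(lra) hK); lra).
  pose proof (linear_growth_of_deriv_ge (fun t => V (x t)) (fun t => dV (x t)) K 1 T ltac:(lra) hT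
                (fun t ht => proj2 (HV x Hx) t ht) HK) as Hgrow.
  assert (K * (T - 1) = K + (M - V x0)) by (unfold T; field; lra).
  pose proof (Hmono 1 ltac:(lra)). pose proof (Hbound (x T) (Hball T ltac:(lra))).
  lra.
Qed.

Lemma vsub_vadd_l u v : vsub (vadd u v) u = v.
Proof. destruct v; unfold vsub, vadd; simpl; f_equal; ring. Qed.

Section Revised_system.

Variables (eps a1 a2 a3 a b c lam : R) (p : V3).
Hypothesis Hp : mfield a1 a2 a3 a b c p = vscale lam p.

Definition energy : V3 -> R :=
  quadratic (mkV3 (a1 / 2) (a2 / 2) (a3 / 2)) (mkV3 0 0 0) (mkV3 a b c).

Definition deviation : V3 -> R :=
  quadratic (vscale (/ (2 * lam)) (shifted lam (mkV3 a1 a2 a3))) p (mkV3 0 0 0).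

Lemma equilibrium_coords :
  a = (lam - a1) * c1 p /\ b = (lam - a2) * c2 p /\ c = (lam - a3) * c3 p.
Proof.
  pose proof (f_equal c1 Hp); pose proof (f_equal c2 Hp); pose proof (f_equal c3 Hp).
  unfold mfield, vscale in *; simpl in *. repeat split; lra.
Qed.

Lemma energy_conserved v :
  dot (quadratic_grad (mkV3 (a1 / 2) (a2 / 2) (a3 / 2)) (mkV3 0 0 0) (mkV3 a b c) v)
      (revised_field eps a1 a2 a3 a b c v) = 0.
Proof.
  replace (quadratic_grad _ _ _ v) with (mfield a1 a2 a3 a b c v)
    by (unfold quadratic_grad, mfield, vadd, vscale, vmul, vsub; simpl; f_equal; field).
  unfold revised_field. set (m := mfield a1 a2 a3 a b c v).
  replace (dot m (vadd (cross v m) (vscale eps (cross (cross v m) m))))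
    with (dot m (cross v m) + eps * dot m (cross (cross v m) m))
    by (unfold dot, vadd, vscale; simpl; ring).
  rewrite !dot_cross_r. ring.
Qed.

(* The gradient of [deviation] is (m(v) - lam v) / lam and m(v) is orthogonal to the field. *)
Lemma deviation_increase v : lam <> 0 ->
  dot (quadratic_grad (vscale (/ (2 * lam)) (shifted lam (mkV3 a1 a2 a3))) p (mkV3 0 0 0) v)
      (revised_field eps a1 a2 a3 a b c v) = eps * norm2 (cross v (mfield a1 a2 a3 a b c v)).
Proof.
  intro hlam. destruct equilibrium_coords as [Ea [Eb Ec]].
  unfold quadratic_grad, revised_field, mfield, shifted, norm2, dot, cross, vadd, vscale, vmul, vsub.
  simpl.
  rewrite Ea, Eb, Ec. field. exact hlam.
Qed.

Lemma cross_mfield v :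
  cross v (mfield a1 a2 a3 a b c v) = cross v (vmul (shifted lam (mkV3 a1 a2 a3)) (vsub v p)).
Proof.
  destruct equilibrium_coords as [Ea [Eb Ec]].
  unfold cross, mfield, shifted, vmul, vsub; simpl. rewrite Ea, Eb, Ec. f_equal; ring.
Qed.

Lemma energy_level y : lam <> 0 ->
  energy (vadd p y) = energy p <-> on_level lam (mkV3 a1 a2 a3) p y.
Proof.
  intro hlam.
  assert (Hdiff : energy (vadd p y) - energy p =
                  lam * dot p y + / 2 * dot y (vmul (mkV3 a1 a2 a3) y)).
  { destruct equilibrium_coords as [Ea [Eb Ec]].
    unfold energy, quadratic, quad1, dot, vmul, vadd; simpl. rewrite Ea, Eb, Ec. field. }
  unfold on_level. split; intro E; lra.
Qed.

Lemma deviation_eq v : lam <> 0 ->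
  deviation v = dot (vsub v p) (vmul (shifted lam (mkV3 a1 a2 a3)) (vsub v p)) / (2 * lam).
Proof.
  intro hlam. unfold deviation, quadratic, quad1, shifted, dot, vmul, vsub, vscale; simpl.
  field. exact hlam.
Qed.

Hypotheses (heps : 0 < eps) (hlam : 0 < lam)
  (h1 : lam < a1) (h2 : lam < a2) (h3 : lam < a3) (hp : 0 < norm2 p).

Lemma shifted_bounds : exists mb Mb, 0 < mb <= Mb /\ forall y,
  mb * norm2 y <= dot y (vmul (shifted lam (mkV3 a1 a2 a3)) y) <= Mb * norm2 y.
Proof. apply rayleigh_bounds; unfold shifted; simpl; lra. Qed.

Lemma deviation_growth_near : exists r kap, 0 < r /\ 0 < kap /\ forall v,
  vnorm (vsub v p) < r -> energy v = energy p ->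
  kap * deviation v <= eps * norm2 (cross v (mfield a1 a2 a3 a b c v)).
Proof.
  destruct (level_cross_coercive lam (mkV3 a1 a2 a3) p) as [kc [r0 [hkc [hr0 Hcoer]]]]; auto.
  destruct shifted_bounds as [mb [Mb [[hmb hmbM] Hb]]].
  set (bb := shifted lam (mkV3 a1 a2 a3)) in *.
  exists (sqrt r0), (eps * kc * (2 * lam / Mb)). split; [apply sqrt_lt_R0; lra|].
  split; [apply Rmult_lt_0_compat; [apply Rmult_lt_0_compat | apply Rdiv_lt_0_compat]; lra|].
  intros v Hv Hlev. rewrite cross_mfield, deviation_eq by lra. fold bb.
  apply vnorm_lt in Hv; [|apply sqrt_lt_R0; lra]. rewrite pow2_sqrt in Hv by lra.
  set (y := vsub v p) in *.
  replace v with (vadd p y) in Hlev |- *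
    by (unfold y; destruct v, p; unfold vadd, vsub; simpl; f_equal; ring).
  apply energy_level in Hlev; [|lra].
  specialize (Hcoer y Hlev ltac:(lra)). destruct (Hb y) as [_ HbM].
  replace (eps * kc * (2 * lam / Mb) * (dot y (vmul bb y) / (2 * lam)))
    with (eps * (kc * (dot y (vmul bb y) / Mb))) by (field; lra).
  apply Rmult_le_compat_l; [lra|]. apply (Rle_trans _ (kc * norm2 y)); [|exact Hcoer].
  apply Rmult_le_compat_l; [lra|].
  apply (Rmult_le_reg_r Mb); [lra|].
  replace (dot y (vmul bb y) / Mb * Mb) with (dot y (vmul bb y)) by (field; lra). lra.
Qed.

Lemma revised_not_stable : ~ lyapunov_stable (revised_field eps a1 a2 a3 a b c) p.
Proof.
  destruct deviation_growth_near as [r [kap [hr [hkap Hgrowth]]]].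
  destruct shifted_bounds as [mb [Mb [[hmb hmbM] Hb]]].
  eapply (not_lyapunov_stable_of_growth _ p energy _ deviation _ r kap (Mb * r ^ 2 / (2 * lam))).
  - apply quadratic_lie.
  - intro v. apply energy_conserved.
  - apply quadratic_lie.
  - intro v. cbv beta. rewrite deviation_increase by lra.
    apply Rmult_le_pos; [lra | apply norm2_ge0].
  - exact hr.
  - exact hkap.
  - intros v Hv Hlev. cbv beta. rewrite deviation_increase by lra. exact (Hgrowth v Hv Hlev).
  - intros v Hv. apply vnorm_lt in Hv; [|exact hr]. rewrite deviation_eq by lra.
    destruct (Hb (vsub v p)) as [_ HbM]. unfold Rdiv.
    apply Rmult_le_compat_r; [left; apply Rinv_0_lt_compat; lra|]. nra.
  - intros delta hdelta.
    destruct (level_points_near lam (mkV3 a1 a2 a3) p hlam h1 h2 h3 hp (delta ^ 2))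
      as [y [[hy0 hyd] Hlev]]; [apply pow2_gt_0; lra|].
    exists (vadd p y). rewrite vsub_vadd_l. repeat split.
    + apply vnorm_lt; lra.
    + apply energy_level; [lra | exact Hlev].
    + rewrite deviation_eq, vsub_vadd_l by lra. destruct (Hb y) as [Hbm _].
      apply Rdiv_lt_0_compat; nra.
Qed.

End Revised_system.

Theorem theorem6p4 (a1 a2 a3 a b c eps lam : R) :
  0 < a1 -> a1 < a2 -> a2 < a3 ->
  0 < eps ->
  ~ (a = 0 /\ b = 0 /\ c = 0) ->
  0 < lam -> lam < a1 ->
  ~ lyapunov_stable (revised_field eps a1 a2 a3 a b c) (e2 a1 a2 a3 a b c lam).
Proof.
  intros h1 h12 h23 heps habc hlam hla.
  assert (Heq : mfield a1 a2 a3 a b c (e2 a1 a2 a3 a b c lam) = vscale lam (e2 a1 a2 a3 a b c lam))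
    by (unfold mfield, e2, vscale; simpl; f_equal; field; lra).
  assert (Hnz : 0 < norm2 (e2 a1 a2 a3 a b c lam)).
  { destruct (equilibrium_coords a1 a2 a3 a b c lam _ Heq) as [Ea [Eb Ec]].
    set (p := e2 a1 a2 a3 a b c lam) in *.
    destruct (Rle_lt_dec (norm2 p) 0) as [Hle|]; [exfalso|assumption].
    apply habc. unfold norm2, dot in Hle. rewrite Ea, Eb, Ec.
    assert (c1 p = 0) by nra. assert (c2 p = 0) by nra. assert (c3 p = 0) by nra.
    repeat split; nra. }
  apply (revised_not_stable eps a1 a2 a3 a b c lam); lra || assumption.
Qed.
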